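(* Fix $c \in \mathbb{R}$. For any $\vartheta \in \mathbb{R}$ and any $\alpha \in (0, 0.5)$ there exists $\delta > 0$ such that whenever $c < x^{\text{obs}} < c + \delta$, we have $\vartheta \notin [\theta(1-\alpha/2), \theta(\alpha/2)]$, where $\theta(\cdot)$ is computed at this $x^{\text{obs}}$.
   Context: Let $\Phi$ denote the standard normal distribution function. For $c \in \mathbb{R}$, $a \ge c$ and $\theta \in \mathbb{R}$ define $$F(a;\theta,c) = \frac{\Phi(a-\theta) - \Phi(c-\theta)}{1-\Phi(c-\theta)}.$$ It is known that for each fixed $x^{\text{obs}} > c$ the map $\theta \mapsto F(x^{\text{obs}};\theta,c)$ is continuous and strictly decreasing from $\mathbb{R}$ onto $(0,1)$. For $p \in (0,1)$ and $x^{\text{obs}} > c$, $\theta(p) = \theta(p; x^{\text{obs}}, c)$ denotes the unique $\theta$ with $F(x^{\text{obs}};\theta,c) = p$; it is strictly decreasing in $p$. The interval $[\theta(1-\alpha/2), \theta(\alpha/2)]$ is the $100(1-\alpha)\%$ conditional confidence interval. *)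

From Stdlib Require Import Reals.
From Coquelicot Require Import Coquelicot.
Open Scope R_scope.

Definition std_normal_pdf (t : R) : R := exp (- (t ^ 2) / 2) / sqrt (2 * PI).

Definition Phi (x : R) : R :=
  RInt_gen std_normal_pdf (Rbar_locally m_infty) (at_point x).

Definition F (a theta c : R) : R :=
  (Phi (a - theta) - Phi (c - theta)) / (1 - Phi (c - theta)).

(* theta(p; xobs, c) is characterised as the (unique) solution t of F(xobs; t, c) = p *)
Definition is_theta (p xobs c t : R) : Prop := F xobs t c = p.

(** The numerator of [F(xobs; theta, c)] is the normal mass of an interval of
    length [xobs - c], hence at most [(xobs - c) / sqrt (2 PI)], while for
    [theta >= vartheta] the denominator [1 - Phi (c - theta)] is at least the
    positive constant [1 - Phi (c - vartheta)].  So once [xobs - c] is small,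
    [F(xobs; theta, c) < alpha / 2] for every [theta >= vartheta], which forces
    [theta(alpha/2) < vartheta].

    The only analytic input is that [Phi] is well defined with [Phi < 1], i.e.
    that the Gaussian integral over any interval is at most [sqrt (2 PI)].  This
    follows from the classical identity
    [(int_0^x e^(-t^2/2) dt)^2 + 2 int_0^1 e^(-x^2 (1+t^2)/2) / (1+t^2) dt = PI/2],
    whose left-hand side has derivative zero and equals [2 atan 1] at [x = 0]. *)

From Stdlib Require Import Reals Lra Psatz Classical.
From Coquelicot Require Import Coquelicot.
Open Scope R_scope.

Definition gauss (t : R) : R := exp (- (t ^ 2) / 2).

Definition gauss_int (x : R) : R := RInt gauss 0 x.

Definition gauss_aux_integrand (x t : R) : R :=
  exp (- (x ^ 2 * (1 + t ^ 2)) / 2) / (1 + t ^ 2).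

Definition gauss_aux (x : R) : R := RInt (gauss_aux_integrand x) 0 1.

Lemma continuous_gauss (x : R) : continuous gauss x.
Proof.
  apply (ex_derive_continuous (K := R_AbsRing) (V := R_NormedModule)).
  unfold gauss; auto_derive; auto.
Qed.

Lemma ex_RInt_gauss (a b : R) : ex_RInt gauss a b.
Proof.
  apply (ex_RInt_continuous (V := R_CompleteNormedModule)).
  intros; apply continuous_gauss.
Qed.

Lemma is_derive_gauss_int (x : R) : is_derive gauss_int x (gauss x).
Proof.
  apply is_derive_RInt with 0.
  - apply filter_forall; intros b.
    apply (RInt_correct (V := R_CompleteNormedModule)), ex_RInt_gauss.
  - apply continuous_gauss.
Qed.

Lemma continuous_gauss_aux_integrand (x t : R) : continuous (gauss_aux_integrand x) t.
Proof.
  apply (ex_derive_continuous (K := R_AbsRing) (V := R_NormedModule)).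
  unfold gauss_aux_integrand; auto_derive; nra.
Qed.

Lemma is_derive_gauss_aux_integrand (x t : R) :
  is_derive (fun u => gauss_aux_integrand u t) x
    (- (x * exp (- (x ^ 2 * (1 + t ^ 2)) / 2))).
Proof.
  unfold gauss_aux_integrand; auto_derive.
  - exact I.
  - replace (- (x * (x * 1) * (1 + t * (t * 1))) * / 2)
      with (- (x ^ 2 * (1 + t ^ 2)) / 2) by (simpl; field).
    field; nra.
Qed.

Lemma continuity_2d_gauss_aux_integrand_derive (x t : R) :
  continuity_2d_pt (fun u v => - (u * exp (- (u ^ 2 * (1 + v ^ 2)) / 2))) x t.
Proof.
  apply continuity_2d_pt_opp, continuity_2d_pt_mult; [apply continuity_2d_pt_id1|].
  apply continuity_1d_2d_pt_comp with (f := exp).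
  { apply derivable_continuous_pt, derivable_pt_exp. }
  apply continuity_2d_pt_ext with (f := fun u v => - (u * u * (1 + v * v)) * / 2).
  { intros; simpl; unfold Rdiv; ring. }
  apply continuity_2d_pt_mult; [|apply continuity_2d_pt_const].
  apply continuity_2d_pt_opp, continuity_2d_pt_mult.
  - apply continuity_2d_pt_mult; apply continuity_2d_pt_id1.
  - apply continuity_2d_pt_plus; [apply continuity_2d_pt_const|].
    apply continuity_2d_pt_mult; apply continuity_2d_pt_id2.
Qed.

Lemma is_derive_gauss_aux (x : R) : is_derive gauss_aux x (- (gauss x * gauss_int x)).
Proof.
  assert (Hparam : is_derive gauss_aux x
    (RInt (fun t => Derive (fun u => gauss_aux_integrand u t) x) 0 1)).
  { apply (is_derive_RInt_param gauss_aux_integrand 0 1 x).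
    - apply filter_forall; intros y t _.
      eexists; apply is_derive_gauss_aux_integrand.
    - intros t _.
      eapply continuity_2d_pt_ext; [|apply continuity_2d_gauss_aux_integrand_derive].
      intros u v; symmetry; apply is_derive_unique, is_derive_gauss_aux_integrand.
    - apply filter_forall; intros y.
      apply (ex_RInt_continuous (V := R_CompleteNormedModule)).
      intros; apply continuous_gauss_aux_integrand. }
  replace (- (gauss x * gauss_int x))
    with (RInt (fun t => Derive (fun u => gauss_aux_integrand u t) x) 0 1); [exact Hparam|].
  (* the derivative of the integrand factors as [- gauss x * (x * gauss (x t))],
     and the substitution [s = x t] turns its integral into [gauss_int x] *)
  rewrite (RInt_ext _ (fun t => scal (- gauss x) (scal x (gauss (x * t + 0))))).
  2:{ intros t _; cbv beta.
      transitivity (- (x * exp (- (x ^ 2 * (1 + t ^ 2)) / 2)));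
        [apply is_derive_unique, is_derive_gauss_aux_integrand|].
      replace (exp (- (x ^ 2 * (1 + t ^ 2)) / 2)) with (gauss x * gauss (x * t + 0)).
      2:{ unfold gauss; rewrite <- exp_plus; f_equal; field. }
      unfold scal; simpl; unfold mult; simpl; ring. }
  rewrite (RInt_scal (V := R_CompleteNormedModule)).
  2:{ apply (ex_RInt_continuous (V := R_CompleteNormedModule)); intros.
      apply (ex_derive_continuous (K := R_AbsRing) (V := R_NormedModule)).
      unfold gauss, scal; simpl; unfold mult; simpl; auto_derive; auto. }
  rewrite (RInt_comp_lin (V := R_CompleteNormedModule)) by apply ex_RInt_gauss.
  unfold gauss_int, scal; simpl; unfold mult; simpl.
  replace (x * 0 + 0) with 0 by ring; replace (x * 1 + 0) with x by ring; ring.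
Qed.

Lemma gauss_aux_ge0 (x : R) : 0 <= gauss_aux x.
Proof.
  apply RInt_ge_0; [lra| |].
  - apply (ex_RInt_continuous (V := R_CompleteNormedModule)).
    intros; apply continuous_gauss_aux_integrand.
  - intros t _; unfold gauss_aux_integrand.
    apply Rle_mult_inv_pos; [left; apply exp_pos | nra].
Qed.

Lemma gauss_aux_0 : gauss_aux 0 = PI / 4.
Proof.
  assert (Hatan : is_RInt (fun t => / (1 + t ^ 2)) 0 1 (minus (atan 1) (atan 0))).
  { apply (is_RInt_derive (V := R_CompleteNormedModule)).
    - intros t _; apply is_derive_Reals, derivable_pt_lim_atan.
    - intros t _; apply (ex_derive_continuous (K := R_AbsRing) (V := R_NormedModule)).
      auto_derive; nra. }
  unfold gauss_aux.
  rewrite (RInt_ext _ (fun t => / (1 + t ^ 2))).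
  2:{ intros t _; unfold gauss_aux_integrand.
      replace (- (0 ^ 2 * (1 + t ^ 2)) / 2) with 0 by (simpl; field).
      rewrite exp_0; unfold Rdiv; apply Rmult_1_l. }
  rewrite (is_RInt_unique _ _ _ _ Hatan), atan_1, atan_0.
  unfold minus, plus, opp; simpl; ring.
Qed.

Lemma gauss_int_sqr_add_aux (x : R) :
  gauss_int x * gauss_int x + 2 * gauss_aux x = PI / 2.
Proof.
  set (Psi := fun y => gauss_int y * gauss_int y + 2 * gauss_aux y).
  assert (Hderiv : forall y, is_derive Psi y 0).
  { intros y.
    assert (Hsq := is_derive_mult _ _ y _ _
      (is_derive_gauss_int y) (is_derive_gauss_int y) ltac:(intros; apply Rmult_comm)).
    assert (Hsum := is_derive_plus _ _ y _ _ Hsq (is_derive_scal _ y 2 _ (is_derive_gauss_aux y))).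
    replace 0 with (plus (plus (mult (gauss y) (gauss_int y)) (mult (gauss_int y) (gauss y)))
                         (2 * - (gauss y * gauss_int y))) by (unfold plus, mult; simpl; ring).
    exact Hsum. }
  assert (Hconst : Psi x = Psi 0).
  { destruct (Rtotal_order x 0) as [h | [-> | h]]; [| reflexivity |].
    - apply eq_is_derive; auto; intros; apply Hderiv.
    - symmetry; apply eq_is_derive; auto; intros; apply Hderiv. }
  change (Psi x = PI / 2); rewrite Hconst; unfold Psi.
  rewrite gauss_aux_0; unfold gauss_int; rewrite RInt_point.
  change (0 * 0 + 2 * (PI / 4) = PI / 2); field.
Qed.

Lemma RInt_gauss_le (a b : R) : RInt gauss a b <= sqrt (2 * PI).
Proof.
  assert (Hsplit : RInt gauss a b = gauss_int b - gauss_int a).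
  { unfold gauss_int.
    rewrite <- (RInt_Chasles (V := R_CompleteNormedModule) gauss 0 a b) by apply ex_RInt_gauss.
    unfold plus; simpl; lra. }
  assert (Ha := gauss_int_sqr_add_aux a); assert (Hb := gauss_int_sqr_add_aux b).
  assert (Haux := gauss_aux_ge0 a); assert (Haux' := gauss_aux_ge0 b).
  assert (Hs := sqrt_pos (2 * PI)).
  assert (Hss := sqrt_sqrt (2 * PI) ltac:(pose proof PI_RGT_0; lra)).
  rewrite Hsplit.
  set (s := sqrt (2 * PI)) in *; set (u := gauss_int a) in *; set (v := gauss_int b) in *.
  (* [(v - u)^2 <= (v - u)^2 + (u + v)^2 = 2 (u^2 + v^2) <= 2 PI] *)
  destruct (Rle_or_lt (v - u) s) as [h | h]; [exact h | exfalso].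
  assert (0 <= (u + v) * (u + v)) by apply Rle_0_sqr.
  nra.
Qed.

Lemma sqrt_2PI_pos : 0 < sqrt (2 * PI).
Proof. apply sqrt_lt_R0; pose proof PI_RGT_0; lra. Qed.

Lemma std_normal_pdf_gauss (t : R) : std_normal_pdf t = scal (/ sqrt (2 * PI)) (gauss t).
Proof. unfold std_normal_pdf, gauss, scal; simpl; unfold mult; simpl; unfold Rdiv; ring. Qed.

Lemma continuous_std_normal_pdf (x : R) : continuous std_normal_pdf x.
Proof.
  apply (ex_derive_continuous (K := R_AbsRing) (V := R_NormedModule)).
  unfold std_normal_pdf; auto_derive; auto.
Qed.

Lemma ex_RInt_std_normal_pdf (a b : R) : ex_RInt std_normal_pdf a b.
Proof.
  apply (ex_RInt_continuous (V := R_CompleteNormedModule)).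
  intros; apply continuous_std_normal_pdf.
Qed.

Lemma std_normal_pdf_pos (t : R) : 0 < std_normal_pdf t.
Proof. apply Rdiv_lt_0_compat; [apply exp_pos | apply sqrt_2PI_pos]. Qed.

Lemma std_normal_pdf_le (t : R) : std_normal_pdf t <= / sqrt (2 * PI).
Proof.
  unfold std_normal_pdf, Rdiv; rewrite <- (Rmult_1_l (/ sqrt (2 * PI))) at 2.
  apply Rmult_le_compat_r; [left; apply Rinv_0_lt_compat, sqrt_2PI_pos|].
  assert (Hexp : - (t ^ 2) * / 2 <= 0) by (pose proof (pow2_ge_0 t); lra).
  rewrite <- exp_0; destruct (Rle_lt_or_eq_dec _ _ Hexp) as [hlt | ->];
    [left; apply exp_increasing, hlt | right; reflexivity].
Qed.

Lemma RInt_std_normal_pdf_ge0 (a b : R) : a <= b -> 0 <= RInt std_normal_pdf a b.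
Proof.
  intros hab; apply RInt_ge_0; [exact hab | apply ex_RInt_std_normal_pdf |].
  intros; left; apply std_normal_pdf_pos.
Qed.

Lemma RInt_std_normal_pdf_le1 (a b : R) : RInt std_normal_pdf a b <= 1.
Proof.
  rewrite (RInt_ext _ _ _ _ (fun t _ => std_normal_pdf_gauss t)).
  rewrite (RInt_scal (V := R_CompleteNormedModule)) by apply ex_RInt_gauss.
  unfold scal; simpl; unfold mult; simpl.
  rewrite <- (Rinv_l (sqrt (2 * PI))) by (pose proof sqrt_2PI_pos; lra).
  apply Rmult_le_compat_l; [left; apply Rinv_0_lt_compat, sqrt_2PI_pos | apply RInt_gauss_le].
Qed.

Lemma RInt_std_normal_pdf_le_length (a b : R) :
  a <= b -> RInt std_normal_pdf a b <= (b - a) * / sqrt (2 * PI).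
Proof.
  intros hab; eapply Rle_trans; [apply Rle_abs|].
  apply abs_RInt_le_const; [exact hab | apply ex_RInt_std_normal_pdf |].
  intros t _; rewrite Rabs_pos_eq by (left; apply std_normal_pdf_pos).
  apply std_normal_pdf_le.
Qed.

Lemma filterlim_m_infty_nondecreasing (f : R -> R) :
  (forall a b, a <= b -> f a <= f b) -> (exists m, forall x, m <= f x) ->
  exists l, filterlim f (Rbar_locally m_infty) (locally l) /\
            forall m, (forall x, m <= f x) -> m <= l.
Proof.
  intros Hmono [m Hm].
  set (S := fun y => exists x, y = - f x).
  destruct (completeness S) as [L [HLub HLleast]].
  { exists (- m); intros y [x ->]; specialize (Hm x); lra. }
  { exists (- f 0), 0; reflexivity. }
  exists (- L); split.
  - apply filterlim_locally; intros eps.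
    assert (Hwit : exists A, L - eps < - f A).
    { apply NNPP; intros hn.
      assert (L <= L - eps).
      { apply HLleast; intros y [x ->].
        destruct (Rle_or_lt (- f x) (L - eps)) as [h | h]; [exact h|].
        exfalso; apply hn; exists x; exact h. }
      destruct eps as [eps Heps]; simpl in *; lra. }
    destruct Hwit as [A HA]; exists A; intros x hx.
    assert (- f x <= L) by (apply HLub; exists x; reflexivity).
    assert (f x <= f A) by (apply Hmono; lra).
    change (Rabs (f x - - L) < eps); apply Rabs_def1; lra.
  - intros m' Hm'.
    enough (L <= - m') by lra.
    apply HLleast; intros y [x ->]; specialize (Hm' x); lra.
Qed.

Definition std_normal_pdf_prim (x : R) : R := RInt std_normal_pdf 0 x.

Lemma std_normal_pdf_prim_sub (a b : R) :
  std_normal_pdf_prim b - std_normal_pdf_prim a = RInt std_normal_pdf a b.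
Proof.
  unfold std_normal_pdf_prim.
  rewrite <- (RInt_Chasles (V := R_CompleteNormedModule) std_normal_pdf 0 a b)
    by apply ex_RInt_std_normal_pdf.
  unfold plus; simpl; lra.
Qed.

Lemma is_derive_std_normal_pdf_prim (x : R) :
  is_derive std_normal_pdf_prim x (std_normal_pdf x).
Proof.
  apply is_derive_RInt with 0.
  - apply filter_forall; intros b.
    apply (RInt_correct (V := R_CompleteNormedModule)), ex_RInt_std_normal_pdf.
  - apply continuous_std_normal_pdf.
Qed.

Lemma Phi_std_normal_pdf_prim :
  exists l, (forall m, (forall x, m <= std_normal_pdf_prim x) -> m <= l) /\
            forall x, Phi x = std_normal_pdf_prim x - l.
Proof.
  destruct (filterlim_m_infty_nondecreasing std_normal_pdf_prim) as [l [Hlim Hinf]].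
  - intros a b hab.
    pose proof (std_normal_pdf_prim_sub a b); pose proof (RInt_std_normal_pdf_ge0 a b hab); lra.
  - exists (std_normal_pdf_prim 0 - 1); intros x.
    pose proof (std_normal_pdf_prim_sub x 0); pose proof (RInt_std_normal_pdf_le1 x 0); lra.
  - exists l; split; [exact Hinf|]; intros x.
    apply is_RInt_gen_unique.
    apply is_RInt_gen_ext with (Derive std_normal_pdf_prim).
    { apply filter_forall; intros ab t _; apply is_derive_unique, is_derive_std_normal_pdf_prim. }
    apply is_RInt_gen_Derive.
    + apply filter_forall; intros ab t _; eexists; apply is_derive_std_normal_pdf_prim.
    + apply filter_forall; intros ab t _.
      apply continuous_ext with std_normal_pdf; [|apply continuous_std_normal_pdf].
      intros; symmetry; apply is_derive_unique, is_derive_std_normal_pdf_prim.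
    + exact Hlim.
    + intros P HP; exact (locally_singleton _ _ HP).
Qed.

Lemma Phi_sub (a b : R) : Phi b - Phi a = RInt std_normal_pdf a b.
Proof.
  destruct Phi_std_normal_pdf_prim as [l [_ HPhi]].
  rewrite !HPhi, <- std_normal_pdf_prim_sub; ring.
Qed.

Lemma Phi_lt1 (y : R) : Phi y < 1.
Proof.
  destruct Phi_std_normal_pdf_prim as [l [Hinf HPhi]].
  (* [prim (y + 1) - 1] is a lower bound of [prim], and [prim y < prim (y + 1)] *)
  assert (Hlow : std_normal_pdf_prim (y + 1) - 1 <= l).
  { apply Hinf; intros x.
    pose proof (std_normal_pdf_prim_sub x (y + 1)); pose proof (RInt_std_normal_pdf_le1 x (y + 1)); lra. }
  assert (Hpos : 0 < RInt std_normal_pdf y (y + 1)).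
  { apply RInt_gt_0; [lra | intros; apply std_normal_pdf_pos | intros; apply continuous_std_normal_pdf]. }
  pose proof (std_normal_pdf_prim_sub y (y + 1)).
  rewrite HPhi; lra.
Qed.

Lemma F_le_of_le (c vartheta xobs t : R) :
  c <= xobs -> vartheta <= t ->
  F xobs t c <= (xobs - c) * / sqrt (2 * PI) / (1 - Phi (c - vartheta)).
Proof.
  intros hx ht.
  assert (HK : 0 < 1 - Phi (c - vartheta)) by (pose proof (Phi_lt1 (c - vartheta)); lra).
  assert (Hden : 1 - Phi (c - vartheta) <= 1 - Phi (c - t)).
  { pose proof (Phi_sub (c - t) (c - vartheta)).
    pose proof (RInt_std_normal_pdf_ge0 (c - t) (c - vartheta) ltac:(lra)); lra. }
  assert (Hnum : Phi (xobs - t) - Phi (c - t) <= (xobs - c) * / sqrt (2 * PI)).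
  { rewrite Phi_sub; replace (xobs - c) with (xobs - t - (c - t)) by ring.
    apply RInt_std_normal_pdf_le_length; lra. }
  assert (Hnum0 : 0 <= Phi (xobs - t) - Phi (c - t)).
  { rewrite Phi_sub; apply RInt_std_normal_pdf_ge0; lra. }
  unfold F, Rdiv.
  apply Rmult_le_compat; [exact Hnum0 | left; apply Rinv_0_lt_compat; lra | exact Hnum |].
  apply Rinv_le_contravar; assumption.
Qed.

Theorem mainTheorem2 (c vartheta alpha : R) :
  0 < alpha < 1/2 ->
  exists delta : R, 0 < delta /\
    forall xobs : R, c < xobs < c + delta ->
      forall tlo thi : R,
        is_theta (1 - alpha / 2) xobs c tlo ->
        is_theta (alpha / 2) xobs c thi ->
        ~ (tlo <= vartheta <= thi).
Proof.
  intros halpha.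
  set (K := 1 - Phi (c - vartheta)).
  assert (HK : 0 < K) by (pose proof (Phi_lt1 (c - vartheta)); unfold K; lra).
  set (s := sqrt (2 * PI)); assert (Hs : 0 < s) by apply sqrt_2PI_pos.
  exists (alpha * K * s / 2); split; [apply Rdiv_lt_0_compat; [repeat apply Rmult_lt_0_compat|]; lra|].
  intros xobs [hc hdelta] tlo thi _ Hthi [_ hthi].
  pose proof (F_le_of_le c vartheta xobs thi ltac:(lra) hthi) as Hbound.
  unfold is_theta in Hthi; rewrite Hthi in Hbound; fold K s in Hbound.
  assert (Hsmall : (xobs - c) * / s / K < alpha / 2).
  { apply Rmult_lt_reg_r with (s * K); [nra|].
    unfold Rdiv; field_simplify; lra. }
  lra.
Qed.
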